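(* Let $G$ be a graph with no isolated vertices such that $\mathcal{Z}^{\mathrm{TE}}_+(G)\cong K_n$. Then either $G\cong K_n$, or $G$ is a tree on $n$ vertices.
   Context: PSD forcing: vertices are colored blue or white; if $B$ is the current set of blue vertices, $C$ a connected component of $G-B$, and $u$ a blue vertex with $N_G(u)\cap V(C)=\{v\}$, then $u$ may force $v$ to become blue. A PSD forcing set is a set of initially blue vertices from which repeated application of this rule turns every vertex blue; $\mathrm{Z}_+(G)$ is the minimum size of a PSD forcing set. $\mathcal{Z}^{\mathrm{TE}}_+(G)$ has as vertices the minimum PSD forcing sets of $G$, with $S_1S_2$ an edge iff $S_1\setminus S_2=\{v_1\}$ and $S_2\setminus S_1=\{v_2\}$ for some vertices $v_1,v_2$. *)

From mathcomp Require Import all_boot.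
Set Implicit Arguments. Unset Strict Implicit. Unset Printing Implicit Defensive.

(* A finite simple graph: vertex type T : finType, adjacency g : rel T,
   assumed symmetric and irreflexive (hypotheses of the theorem). *)

Section PSD.
Variables (T : finType) (g : rel T).

Definition restr (B : {set T}) : rel T :=
  [rel x y | [&& x \notin B, y \notin B & g x y]].

Definition comp (B : {set T}) (v : T) : {set T} :=
  [set w | (v \notin B) && (w \notin B) && connect (restr B) v w].

Definition psd_force (B : {set T}) (u v : T) : Prop :=
  u \in B /\ v \notin B /\
  [set w in comp B v | g u w] = [set v].

Inductive psd_reach (S : {set T}) : {set T} -> Prop :=
| psd_reach_init : psd_reach S S
| psd_reach_step B u v : psd_reach S B -> psd_force B u v -> psd_reach S (v |: B).

Definition psd_forcing_set (S : {set T}) : Prop := psd_reach S [set: T].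

(* minimum PSD forcing set: its size is Z_+(G) *)
Definition min_psd_forcing_set (S : {set T}) : Prop :=
  psd_forcing_set S /\ forall S', psd_forcing_set S' -> #|S| <= #|S'|.

Definition te_adj (S1 S2 : {set T}) : Prop :=
  (exists v1, S1 :\: S2 = [set v1]) /\ (exists v2, S2 :\: S1 = [set v2]).

(* Z^TE_+(G) is isomorphic to K_n, K_n having vertex set 'I_n and
   edges i j for i != j: a bijection f from 'I_n onto the set of minimum
   PSD forcing sets preserving and reflecting adjacency. *)
Definition TE_iso_complete (n : nat) : Prop :=
  exists f : 'I_n -> {set T},
    injective f /\
    (forall i, min_psd_forcing_set (f i)) /\
    (forall S, min_psd_forcing_set S -> exists i, f i = S) /\
    (forall i j, te_adj (f i) (f j) <-> i != j).

Definition no_isolated : Prop := forall x, exists y, g x y.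

Definition connected_graph : Prop := forall x y, connect g x y.

Definition acyclic_graph : Prop :=
  forall c : seq T, uniq c -> 3 <= size c -> ~~ cycle g c.

Definition is_tree : Prop := connected_graph /\ acyclic_graph.

End PSD.

Definition complete_rel n : rel 'I_n := fun i j => i != j.

Definition graph_iso (T1 T2 : finType) (e1 : rel T1) (e2 : rel T2) : Prop :=
  exists f : T1 -> T2, bijective f /\ forall x y, e1 x y = e2 (f x) (f y).
Arguments complete_rel n : clear implicits.

(* The argument rests on two exchange properties of minimum PSD forcing
   sets: every vertex lies in some minimum PSD forcing set and, when G has no
   isolated vertex, every vertex lies outside some minimum PSD forcing set.
   Both come from moving a force [u -> v] of a forcing process to its very
   start and then reversing it, which trades [u] for [v] in the initial set.
   If G is complete, the minimum PSD forcing sets are the complements of single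
   vertices, so Z^TE_+(G) is a copy of G. Otherwise Z_+(G) <= |V(G)| - 2, and
   as soon as Z_+(G) >= 2 the exchange properties produce minimum PSD forcing
   sets that are not pairwise adjacent in Z^TE_+(G). Hence Z_+(G) = 1: every
   single vertex is a PSD forcing set, which makes G a tree whose vertices
   correspond to those of Z^TE_+(G). *)

From Pilot Require Import Defs.
From mathcomp Require Import all_boot zify.
From Stdlib Require Import Classical.
Set Implicit Arguments. Unset Strict Implicit. Unset Printing Implicit Defensive.

Lemma connect_invariant (T : finType) (e e' : rel T) (A : pred T) x z :
  (forall a b, A a -> e a b -> A b && e' a b) -> A x -> connect e x z ->
  connect e' x z && A z.
Proof.
move=> inv Ax /connectP [p pth ->] {z}.
elim: p x Ax pth => [|y p IH] x Ax /=; first by rewrite connect0 Ax.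
case/andP=> exy pth; case/andP: (inv _ _ Ax exy) => Ay e'xy.
case/andP: (IH y Ay pth) => c1 ->; rewrite andbT.
exact: connect_trans (connect1 e'xy) c1.
Qed.

Section PSDForcing.
Variables (T : finType) (g : rel T).
Hypotheses (gsym : symmetric g) (girr : irreflexive g).
Implicit Types (A B P Q S X : {set T}) (a b c p s t u v w x y z : T).

Local Notation component := (Defs.comp g).
Local Notation force := (psd_force g).
Local Notation reach := (psd_reach g).
Local Notation forcing := (psd_forcing_set g).
Local Notation minimum := (min_psd_forcing_set g).

Lemma restr_sym B : symmetric (restr g B).
Proof. by move=> x y; rewrite /restr /= gsym andbCA. Qed.

Lemma restr_edge B x y : x \notin B -> y \notin B -> g x y -> restr g B x y.
Proof. by move=> xB yB gxy; rewrite /restr /= xB yB. Qed.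

Lemma in_comp B v w :
  (w \in component B v) = [&& v \notin B, w \notin B & connect (restr g B) v w].
Proof. by rewrite inE andbA. Qed.

Lemma comp_notin B v w : w \in component B v -> w \notin B.
Proof. by rewrite in_comp => /and3P[]. Qed.

Lemma comp_refl B v : v \notin B -> v \in component B v.
Proof. by move=> vB; rewrite in_comp vB connect0. Qed.

Lemma comp_sym B v w : w \in component B v -> v \in component B w.
Proof.
by rewrite !in_comp (sym_connect_sym (restr_sym B)) => /and3P[-> -> ->].
Qed.

Lemma comp_trans B v w z :
  w \in component B v -> z \in component B w -> z \in component B v.
Proof.
rewrite !in_comp => /and3P[-> _ c1] /and3P[_ -> c2].
exact: connect_trans c1 c2.
Qed.

Lemma comp_of_mem B v w : w \in component B v -> component B w = component B v.
Proof.
move=> wC; apply/setP=> z; apply/idP/idP; first exact: comp_trans.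
exact: comp_trans (comp_sym wC).
Qed.

Lemma comp_edge B v w z :
  w \in component B v -> z \notin B -> g w z -> z \in component B v.
Proof.
move=> wC zB gwz; apply: (comp_trans wC).
by rewrite in_comp (comp_notin wC) zB connect1 // restr_edge // (comp_notin wC).
Qed.

Lemma comp_subset B B' v : B \subset B' -> component B' v \subset component B v.
Proof.
move=> sBB'; have outB x : x \notin B' -> x \notin B.
  by apply: contra; apply: subsetP.
apply/subsetP=> w; rewrite !in_comp => /and3P[/outB -> /outB -> c] /=.
apply: connect_sub c => x y /and3P[/outB xB /outB yB gxy].
exact/connect1/restr_edge.
Qed.

Lemma comp_shrink B B' y : B' \subset B -> y \notin B ->
  (forall z z', z \in component B y -> g z z' -> z' \notin B' -> z' \notin B) ->
  component B' y = component B y.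
Proof.
move=> sB'B yB closed; apply/eqP; rewrite eqEsubset (comp_subset _ sB'B) andbT.
apply/subsetP=> w; rewrite in_comp => /and3P[_ _ c].
have inv a b : a \in component B y -> restr g B' a b ->
    (b \in component B y) && restr g B a b.
  move=> aC /and3P[_ bB' gab]; have bB := closed _ _ aC gab bB'.
  by rewrite (comp_edge aC bB gab) restr_edge // (comp_notin aC).
by case/andP: (connect_invariant inv (comp_refl yB) c).
Qed.

Lemma comp_isolated B v : v \notin B -> (forall z, g v z -> z \in B) ->
  component B v = [set v].
Proof.
move=> vB nbrB; apply/setP=> w; rewrite in_set1.
apply/idP/eqP=> [|->]; last exact: comp_refl.
rewrite in_comp => /and3P[_ _ c].
have inv a b : pred1 v a -> restr g B a b -> pred1 v b && true.
  by move=> /eqP-> /and3P[_ bB /nbrB]; rewrite (negbTE bB).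
by case/andP: (connect_invariant inv (eqxx v) c) => _ /eqP.
Qed.

Lemma force_edge B u v : force B u v -> [/\ u \in B, v \notin B & g u v].
Proof.
case=> uB [vB E]; split=> //.
by have := set11 v; rewrite -E inE => /andP[].
Qed.

Lemma force_nbr B u v w : force B u v -> w \in component B v -> g u w -> w = v.
Proof. by case=> _ [_ E] wC guw; apply/set1P; rewrite -E inE wC. Qed.

Lemma force_intro B u v : u \in B -> v \notin B -> g u v ->
  (forall w, w \in component B v -> g u w -> w = v) -> force B u v.
Proof.
move=> uB vB guv nbr; do 2!split=> //; apply/setP=> w; rewrite inE in_set1.
by apply/andP/eqP=> [[wC guw]|->]; [exact: nbr | rewrite comp_refl].
Qed.

Lemma force_isolated B u v : u \in B -> v \notin B -> g u v ->
  (forall z, g v z -> z \in B) -> force B u v.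
Proof.
by move=> uB vB guv nbrB; apply: force_intro => // w; rewrite comp_isolated // => /set1P.
Qed.

Lemma forceS B B' u v : force B u v -> B \subset B' -> v \notin B' -> force B' u v.
Proof.
move=> F sBB' vB'; have [uB _ guv] := force_edge F.
apply: force_intro (subsetP sBB' _ uB) vB' guv _ => w wC.
exact/(force_nbr F)/(subsetP (comp_subset v sBB')).
Qed.

Lemma reach_subset S B : reach S B -> S \subset B.
Proof. by elim=> // B0 u v _ sSB0 _; apply: subset_trans sSB0 (subsetUr _ _). Qed.

Lemma reach_trans S B X : reach S B -> reach B X -> reach S X.
Proof. by move=> RB; elim=> // B0 u v _ RB0 F; apply: psd_reach_step RB0 F. Qed.

Lemma reach_setU S S' B : reach S B -> S \subset S' -> reach S' (B :|: S').
Proof.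
move=> R sSS'; elim: R => [|B0 u v _ R F]; first by rewrite (setUidPr sSS'); constructor.
rewrite -setUA; case: (boolP (v \in B0 :|: S')) => vB0.
  by rewrite (setUidPr _) ?sub1set.
exact: psd_reach_step R (forceS F (subsetUl _ _) vB0).
Qed.

Lemma forcing_reach S S' X : forcing S -> reach S' X -> S \subset X -> forcing S'.
Proof.
move=> FS R sSX; apply: reach_trans R _.
by have := reach_setU FS sSX; rewrite (setUidPl (subsetT _)).
Qed.

Lemma reach_first S B : reach S B ->
  B = S \/ exists u w, force S u w /\ reach (w |: S) B.
Proof.
elim=> [|B0 u v R [->|[u' [w [F' R']]]] F]; first by left.
  by right; exists u, v; split=> //; constructor.
by right; exists u', w; split=> //; apply: psd_reach_step R' F.
Qed.

Lemma reach_forced S B v : reach S B -> v \in B ->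
  v \in S \/ exists B0 u, reach S B0 /\ force B0 u v.
Proof.
elim=> [|B0 u y R IH F]; first by left.
by rewrite in_setU1 => /predU1P[->|/IH //]; right; exists B0, u.
Qed.

Lemma reach_swap S a b : force S a b -> reach ((b |: S) :\ a) (b |: S).
Proof.
move=> F; have [aS bS gab] := force_edge F.
have nba : b != a by apply: contraNneq bS => ->.
set S' := (b |: S) :\ a.
have outS x : x \notin S' -> x != a -> x \notin S.
  by rewrite !inE negb_and negb_or => /orP[/negPn->|/andP[_ ->]].
have -> : b |: S = a |: S' by rewrite setD1K // !inE aS orbT.
apply: psd_reach_step (psd_reach_init _ _) _.
apply: (force_intro (u := b)); first by rewrite !inE eqxx nba.
  by rewrite !inE eqxx.
  by rewrite gsym.
(* [b] was the only neighbour of [a] in the component of [b] in [G - S], so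
   the component of [a] in [G - S'] avoids that component. *)
pose C := [pred x | x \notin component S b].
have inv x z : C x -> restr g S' x z -> C z && true.
  move=> xC /and3P[xS' zS' gxz]; rewrite andbT; apply/negP => zC.
  case: (eqVneq x a) => [xa|nxa].
    by move: zS'; rewrite xa in gxz; rewrite (force_nbr F zC gxz) !inE eqxx nba.
  by move/negP: xC; apply; apply: comp_edge zC (outS _ xS' nxa) _; rewrite gsym.
have aC : C a by apply: contraTN aS => /comp_notin.
move=> w; rewrite in_comp => /and3P[_ wS' c] gbw; case: (eqVneq w a) => // nwa.
case/andP: (connect_invariant inv aC c) => _ /negP[].
exact: comp_edge (comp_refl bS) (outS _ wS' nwa) gbw.
Qed.

Lemma card_swap S a b : force S a b -> #|(b |: S) :\ a| = #|S|.
Proof.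
case/force_edge=> aS bS _; have := cardsD1 a (b |: S).
by rewrite !inE aS orbT cardsU1 bS => -[].
Qed.

Lemma forcing_swap S a b : forcing S -> force S a b -> forcing ((b |: S) :\ a).
Proof. by move=> FS F; apply: forcing_reach FS (reach_swap F) (subsetUr _ _). Qed.

Section RestrictToComponent.
Variables (S : {set T}) (b : T).
Local Notation D := (component S b).

Lemma restr_comp B y : S \subset B -> y \in D -> y \notin B ->
  component (S :|: (B :&: D)) y = component B y.
Proof.
move=> sSB yD yB; apply: comp_shrink => //; first by rewrite subUset sSB subIset ?subxx.
move=> z z' zC gzz'; rewrite in_setU in_setI negb_or negb_and.
case/andP=> z'S /orP[//|z'D].
have zD : z \in D by apply: comp_trans yD (subsetP (comp_subset y sSB) _ zC).
by move: z'D; rewrite (comp_edge zD z'S gzz').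
Qed.

Lemma restr_force B u y : S \subset B -> y \in D -> force B u y ->
  force (S :|: (B :&: D)) u y.
Proof.
move=> sSB yD F; have [uB yB guy] := force_edge F.
apply: (force_intro _ _ guy).
- rewrite in_setU in_setI uB /=; case: (boolP (u \in S)) => //= uS.
  by apply: comp_edge yD uS _; rewrite gsym.
- by rewrite in_setU in_setI (negbTE yB) orbF; exact: contra (subsetP sSB y) yB.
- by move=> w; rewrite restr_comp //; apply: force_nbr F.
Qed.

Lemma restr_reach B : reach S B -> reach S (S :|: (B :&: D)).
Proof.
elim=> [|B0 u y R IH F]; first by rewrite (setUidPl _) ?subsetIl //; constructor.
case: (boolP (y \in D)) => yD.
  have -> : S :|: ((y |: B0) :&: D) = y |: (S :|: (B0 :&: D)).
    apply/setP=> z; rewrite !(in_setU, in_setI, in_set1).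
    by case: eqVneq => // ->; rewrite yD orbT.
  exact: psd_reach_step IH (restr_force (reach_subset R) yD F).
suff -> : S :|: ((y |: B0) :&: D) = S :|: (B0 :&: D) by [].
apply/setP=> z; rewrite !(in_setU, in_setI, in_set1).
by case: eqVneq => // ->; rewrite (negbTE yD) !andbF.
Qed.

End RestrictToComponent.

Section RemoveFirstForcer.
Variables (S : {set T}) (b s1 w1 : T).
Hypotheses (s1S : s1 \in S) (nbr_s1 : forall z, z \in component S b -> g s1 z -> z = w1).
Local Notation D := (component S b).

Lemma forceD1 Q u y : S \subset Q -> w1 \in Q -> y \in D -> force Q u y ->
  force (Q :\ s1) u y.
Proof.
move=> sSQ w1Q yD F; have [uQ yQ guy] := force_edge F.
have nus : u != s1.
  apply: contraNneq yQ => us; suff -> : y = w1 by [].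
  by apply: nbr_s1 yD _; rewrite -us.
apply: (force_intro _ _ guy); first by rewrite in_setD1 nus.
  by rewrite in_setD1 (negbTE yQ) andbF.
move=> w; rewrite (@comp_shrink Q) ?subD1set //; first exact: force_nbr F.
move=> z z' zC gzz'; rewrite in_setD1 negb_and negbK => /orP[/eqP zs|//].
have zD : z \in D by apply: comp_trans yD (subsetP (comp_subset y sSQ) _ zC).
have := nbr_s1 zD; rewrite gsym -zs => /(_ gzz') zw.
by move: (comp_notin zC); rewrite zw w1Q.
Qed.

Lemma reach_setD1 P Q : reach P Q -> w1 |: S \subset P -> Q \subset S :|: D ->
  reach (P :\ s1) (Q :\ s1).
Proof.
move=> R sP; elim: R => [|Q0 u y R IH F] sQ; first by constructor.
have sQ0 : Q0 \subset S :|: D := subset_trans (subsetUr _ _) sQ.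
have sPQ0 := subset_trans sP (reach_subset R).
have [_ yQ0 _] := force_edge F.
have yS : y \notin S := contraNN (subsetP (subset_trans (subsetUr _ _) sPQ0) y) yQ0.
have yD : y \in D by have := subsetP sQ y (setU11 _ _); rewrite in_setU (negbTE yS).
have nys : y != s1 by apply: contraNneq yS => ->.
have -> : (y |: Q0) :\ s1 = y |: (Q0 :\ s1).
  by apply/setP=> z; rewrite !inE; case: (eqVneq z y) => // ->; rewrite nys.
apply: psd_reach_step (IH sQ0) (forceD1 _ _ yD F).
  exact: subset_trans (subsetUr _ _) sPQ0.
exact: subsetP sPQ0 _ (setU11 _ _).
Qed.

End RemoveFirstForcer.

(* Restrict the process to the component [D] of [b] in [G - S] and exchange
   its first force [s1 -> w1]: this strictly shrinks [B :\: S]. *)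
Lemma force_at_start S B a b : reach S B -> force B a b ->
  exists S', [/\ #|S'| = #|S|, force S' a b & exists2 X, reach S' X & S \subset X].
Proof.
have [m] := ubnP #|B :\: S|; elim: m => // m IH in S B *; move=> ltm R F.
have [_ bB _] := force_edge F.
have sSB := reach_subset R.
have bS : b \notin S := contraNN (subsetP sSB b) bB.
set D := component S b.
have FD := restr_force sSB (comp_refl bS) F.
case: (reach_first (restr_reach b R)) => [E|[s1 [w1 [F1 R1]]]].
  by rewrite E in FD; exists S; split=> //; exists S; [constructor|].
have [s1S w1S _] := force_edge F1.
have w1BD : w1 \in S :|: (B :&: D) := subsetP (reach_subset R1) _ (setU11 _ _).
have [w1B w1D] : w1 \in B /\ w1 \in D.
  by apply/andP; move: w1BD; rewrite in_setU in_setI (negbTE w1S).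
have nbr_s1 z : z \in D -> g s1 z -> z = w1.
  by move=> zD; apply: force_nbr F1 _; rewrite (comp_of_mem w1D).
have R' := reach_setD1 s1S nbr_s1 R1 (subxx _) (setUS _ (subsetIr _ _)).
have F' := forceD1 nbr_s1 (subsetUl _ _) w1BD (comp_refl bS) FD.
have ltm' : #|((S :|: (B :&: D)) :\ s1) :\: ((w1 |: S) :\ s1)| < m.
  have sub : ((S :|: (B :&: D)) :\ s1) :\: ((w1 |: S) :\ s1) \subset (B :\: S) :\ w1.
    apply/subsetP=> z; rewrite !inE.
    by case: (z == s1); case: (z == w1); case: (z \in S); case: (z \in B).
  apply: leq_ltn_trans (subset_leq_card sub) (leq_trans (proper_card (properD1 _)) ltm).
  by rewrite !inE w1S w1B.
have [S' [cS' F'' [X RX sX]]] := IH _ _ ltm' R' F'.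
exists S'; split=> //; first by rewrite cS' card_swap.
exists ((w1 |: S) :|: X); first exact: reach_trans RX (reach_setU (reach_swap F1) sX).
by apply: subsetU; rewrite subsetUr.
Qed.

Lemma forcing_exchange S B a b : forcing S -> reach S B -> force B a b ->
  exists S', [/\ forcing S', #|S'| = #|S|, a \notin S' & b \in S'].
Proof.
move=> FS R F; have [S' [cS' F' [X RX sSX]]] := force_at_start R F.
have [aS' bS' _] := force_edge F'.
exists ((b |: S') :\ a); split.
- exact: forcing_swap (forcing_reach FS RX sSX) F'.
- by rewrite card_swap.
- by rewrite !inE eqxx.
- by rewrite !inE eqxx andbT; apply: contraNneq bS' => ->.
Qed.

Lemma exists_minimum : exists S, minimum S.
Proof.
suff min_below m S : forcing S -> #|S| < m -> exists S', minimum S'.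
  exact: min_below (psd_reach_init g setT) (ltnSn _).
elim: m S => // m IH S FS ltm.
have [[S' [FS' ltS'S]]|noS] := classic (exists S', forcing S' /\ #|S'| < #|S|).
  exact: IH FS' (leq_trans ltS'S ltm).
exists S; split=> // S' FS'; rewrite leqNgt; apply/negP => ltS'S.
by apply: noS; exists S'.
Qed.

Lemma minimum_card S S' : minimum S -> minimum S' -> #|S'| = #|S|.
Proof. by case=> FS minS [FS' minS']; apply/eqP; rewrite eqn_leq minS' ?minS. Qed.

Lemma minimum_of_card S S' : minimum S -> forcing S' -> #|S'| = #|S| -> minimum S'.
Proof. by case=> _ minS FS' cS'; split=> // X FX; rewrite cS' minS. Qed.

Lemma forcing_with S v : forcing S ->
  exists S', [/\ forcing S', #|S'| = #|S| & v \in S'].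
Proof.
move=> FS; case: (reach_forced FS (in_setT v)) => [vS|[B [u [R F]]]].
  by exists S.
by have [S' [FS' cS' _ vS']] := forcing_exchange FS R F; exists S'.
Qed.

Lemma minimum_with S v : minimum S -> exists2 S', minimum S' & v \in S'.
Proof.
move=> mS; have [S' [FS' cS' vS']] := forcing_with v mS.1.
by exists S'; first exact: minimum_of_card mS FS' cS'.
Qed.

Lemma reach_last_nbr S B v : v \in S -> reach S B -> (forall x, g v x -> x \in B) ->
  (forall x, g v x -> x \in S) \/ exists B0 y, reach S B0 /\ force B0 v y.
Proof.
move=> vS; elim=> [|B0 u y R IH F] nbrB; first by left.
have [nbrB0|] := boolP [forall x, g v x ==> (x \in B0)].
  by apply: IH => x gvx; exact: implyP (forallP nbrB0 x) gvx.
case/forallPn=> x; rewrite negb_imply => /andP[gvx xB0].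
have [_ yB0 _] := force_edge F.
have xy : x = y by move: (nbrB x gvx); rewrite in_setU1 (negbTE xB0) orbF => /eqP.
right; exists B0, y; split=> //; subst x.
apply: (force_intro (subsetP (reach_subset R) _ vS) yB0 gvx) => w wC gvw.
by move: (nbrB w gvw); rewrite in_setU1 (negbTE (comp_notin wC)) orbF => /eqP.
Qed.

Lemma minimum_nbr_notin S v : no_isolated g -> minimum S -> v \in S ->
  exists2 x, g v x & x \notin S.
Proof.
move=> noiso [FS minS] vS.
have [/existsP[x /andP[gvx xS]]|/existsPn nbrS] :=
  boolP [exists x, g v x && (x \notin S)].
  by exists x.
have {}nbrS x : g v x -> x \in S :\ v.
  move=> gvx; have := nbrS x; rewrite gvx negbK in_setD1 => ->.
  by rewrite andbT; apply: contraTneq gvx => ->; rewrite girr.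
have [y gvy] := noiso v.
have F : force (S :\ v) y v.
  by apply: force_isolated (nbrS _ gvy) _ _ nbrS; rewrite ?inE ?eqxx // gsym.
have R := psd_reach_step (psd_reach_init g _) F; rewrite setD1K // in R.
have := minS _ (forcing_reach FS R (subxx _)).
by rewrite (cardsD1 v S) vS ltnn.
Qed.

Lemma minimum_without S v : no_isolated g -> minimum S ->
  exists2 S', minimum S' & v \notin S'.
Proof.
move=> noiso mS; case: (boolP (v \in S)) => vS; last by exists S.
have [x gvx xS] := minimum_nbr_notin noiso mS vS.
have FS := mS.1.
case: (reach_last_nbr vS FS (fun x _ => in_setT x)) => [nbrS|[B [y [R F]]]].
  by rewrite nbrS in xS.
have [S' [FS' cS' vS' _]] := forcing_exchange FS R F.
by exists S'; first exact: minimum_of_card mS FS' cS'.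
Qed.

Lemma forcing_card_gt0 S : 0 < #|T| -> forcing S -> 0 < #|S|.
Proof.
move=> Tne /reach_first[<-|[u [w [F _]]]]; first by rewrite cardsT.
by have [uS _ _] := force_edge F; apply/card_gt0P; exists u.
Qed.

Lemma forcing_setC1 y : no_isolated g -> forcing (~: [set y]).
Proof.
move=> noiso; have [u gyu] := noiso y.
have nbrB z : g y z -> z \in ~: [set y].
  by rewrite !inE => gyz; apply: contraTneq gyz => ->; rewrite girr.
have F : force (~: [set y]) u y.
  by apply: force_isolated (nbrB _ gyu) _ _ nbrB; rewrite ?inE ?eqxx // gsym.
by have := psd_reach_step (psd_reach_init g _) F; rewrite setUCr.
Qed.

Lemma forcing_setC2 x y : no_isolated g -> x != y -> ~~ g x y ->
  forcing (~: [set x; y]).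
Proof.
move=> noiso nxy ngxy; have [u gxu] := noiso x; have [w gyw] := noiso y.
set B := ~: [set x; y].
have nbrx z : g x z -> z \in B.
  move=> gxz; rewrite !inE negb_or.
  by apply/andP; split; apply: contraTneq gxz => ->; rewrite ?girr ?(negbTE ngxy).
have Fx : force B u x.
  by apply: force_isolated (nbrx _ gxu) _ _ nbrx; rewrite ?inE ?eqxx // gsym.
have nbry z : g y z -> z \in x |: B.
  move=> gyz; rewrite !inE; case: (eqVneq z x) => //= _.
  by apply: contraTneq gyz => ->; rewrite girr.
have Fy : force (x |: B) w y.
  apply: force_isolated (nbry _ gyw) _ _ nbry; last by rewrite gsym.
  by rewrite !inE eqxx orbT eq_sym (negbTE nxy).
have := psd_reach_step (psd_reach_step (psd_reach_init g B) Fx) Fy.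
suff -> : y |: (x |: B) = [set: T] by [].
by apply/setP=> z; rewrite !inE; case: (z == y); case: (z == x).
Qed.

Lemma complete_forcing_card S : (forall x y, x != y -> g x y) -> forcing S ->
  #|~: S| <= 1.
Proof.
move=> cpl FS; rewrite leqNgt; apply/negP => /card_gt1P[x [y [xS yS nxy]]].
rewrite !inE in xS yS.
case: (reach_first FS) => [/setP/(_ x)|[u [w [F _]]]]; first by rewrite inE (negbTE xS).
have [uS wS _] := force_edge F.
have [t tS ntw] : exists2 t, t \notin S & t != w.
  by case: (eqVneq x w) => [xw|]; [exists y; rewrite // -xw eq_sym | exists x].
have gwt : g w t by apply: cpl; rewrite eq_sym.
have gut : g u t by apply: cpl; apply: contraNneq tS => <-.
by move/eqP: ntw; apply; apply: force_nbr F (comp_edge (comp_refl wS) tS gwt) gut.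
Qed.

Lemma forcing_set1_connected s : forcing [set s] -> connected_graph g.
Proof.
move=> Fs.
have conn B : reach [set s] B -> forall z, z \in B -> connect g s z.
  elim=> [|B0 u y R IH F] z; first by move/set1P->; exact: connect0.
  case/setU1P=> [->|/IH //]; have [uB0 _ guy] := force_edge F.
  exact: connect_trans (IH _ uB0) (connect1 guy).
move=> x y; apply: connect_trans (conn _ Fs y (in_setT y)).
by rewrite (sym_connect_sym gsym); apply: conn Fs _ (in_setT x).
Qed.

(* Every component of [G - s] would stay white forever if [s] had two
   neighbours in it. *)
Lemma forcing_set1_nbr s p t : forcing [set s] -> g s p -> g s t ->
  t \in component [set s] p -> t = p.
Proof.
move=> Fs gsp gst tW; apply/eqP; apply: contraT => ntp.
set W := component [set s] p.
have pW : p \in W.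
  by apply: comp_refl; rewrite inE; apply: contraTneq gsp => <-; rewrite girr.
suff white B : reach [set s] B -> forall z, z \in W -> z \notin B.
  by have := white _ Fs _ pW; rewrite inE.
elim=> [|B0 u y R IH F] z zW; first exact: comp_notin zW.
rewrite in_setU1 negb_or (IH _ zW) andbT; apply/eqP => zy; subst z.
have [uB0 yB0 guy] := force_edge F.
have CB0 : component B0 y = W.
  rewrite /W -(comp_of_mem zW); symmetry; apply: comp_shrink (reach_subset R) yB0 _.
  move=> z z' zC gzz' z's; apply: IH; rewrite /W -(comp_of_mem zW).
  exact: comp_edge (subsetP (comp_subset y (reach_subset R)) _ zC) z's gzz'.
case: (eqVneq u s) => [us|nus].
  suff [ty py] : t = y /\ p = y by rewrite ty py eqxx in ntp.
  by subst u; split; apply: (force_nbr F); rewrite ?CB0.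
have uW : u \in W by apply: comp_edge zW _ _; rewrite ?inE // gsym.
by rewrite (negbTE (IH _ uW)) in uB0.
Qed.

Lemma forcing_set1_acyclic : (forall s, forcing [set s]) -> acyclic_graph g.
Proof.
move=> Fs [|s [|p [|x q]]] // /andP[sr /andP[pr _]] _; apply/negP.
case/and3P=> gsp gpx; change (path g x (rcons q s) -> False).
rewrite rcons_path => /andP[pth gts].
set r := x :: q; set t := last x q.
have tr : t \in r := mem_last x q.
have tW : t \in component [set s] p.
  have ns z : z \in p :: r -> z \notin [set s].
    by move=> zr; rewrite inE; apply: contraNneq sr => <-.
  have tpr : t \in p :: r by rewrite inE tr orbT.
  rewrite in_comp !ns ?mem_head //=.
  apply/connectP; exists r => //; apply: (sub_in_path (P := [pred z | z \notin [set s]])).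
  - by move=> a b /= sa sb; apply: restr_edge.
  - by apply/allP=> z /ns.
  - by rewrite /= gpx.
have := forcing_set1_nbr (Fs s) gsp _ tW; rewrite gsym => /(_ gts) tp.
by rewrite -tp tr in pr.
Qed.

Lemma te_adj_subD1 S S' c : te_adj S S' -> c \in S -> c \notin S' ->
  S :\ c \subset S'.
Proof.
case=> [[d E] _] cS cS'; apply/subsetP=> z /setD1P[nzc zS].
apply: contraNT nzc => zS'; have /set1P-> : z \in [set d] by rewrite -E inE zS zS'.
by apply/eqP/esym/set1P; rewrite -E inE cS cS'.
Qed.

Lemma te_complete_adj n : TE_iso_complete g n ->
  forall S S', minimum S -> minimum S' -> S != S' -> te_adj S S'.
Proof.
case=> f [_ [_ [onto adj]]] S S' /onto[i fi] /onto[j fj]; subst S S' => nfij.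
by apply/adj; apply: contraNneq nfij => ->.
Qed.

Lemma te_complete_bij n (phi : T -> {set T}) : TE_iso_complete g n ->
  injective phi -> (forall S, minimum S <-> exists x, S = phi x) ->
  exists h : T -> 'I_n, bijective h.
Proof.
case=> f [finj [fmin [onto _]]] phi_inj minE.
have ex_i x : exists i, f i == phi x.
  by have [i fi] := onto _ (proj2 (minE _) (ex_intro _ x erefl)); exists i; rewrite fi.
have ex_x i : exists x, phi x == f i by have [x ->] := proj1 (minE _) (fmin i); exists x.
exists (fun x => xchoose (ex_i x)), (fun i => xchoose (ex_x i)) => [x|i].
  by apply: phi_inj; rewrite (eqP (xchooseP (ex_x _))) (eqP (xchooseP (ex_i x))).
by apply: finj; rewrite (eqP (xchooseP (ex_i _))) (eqP (xchooseP (ex_x i))).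
Qed.

Lemma minimum_setC1 : 0 < #|T| -> no_isolated g -> (forall x y, x != y -> g x y) ->
  forall S, minimum S <-> exists x, S = ~: [set x].
Proof.
move=> Tne noiso cpl S; have [x0 _] := card_gt0P Tne; split=> [[FS minS]|[x ->]].
  have := minS _ (forcing_setC1 x0 noiso); have := complete_forcing_card cpl FS.
  have := cardsC S; rewrite cardsC1 => cST le1 leS.
  have /cards1P[x Ex] : #|~: S| == 1 by apply/eqP; lia.
  by exists x; rewrite -Ex setCK.
split=> [|S' FS']; first exact: forcing_setC1.
have := complete_forcing_card cpl FS'; have := cardsC S'; rewrite cardsC1; lia.
Qed.

Lemma minimum_set1 : 0 < #|T| -> (forall x, forcing [set x]) ->
  forall S, minimum S <-> exists x, S = [set x].
Proof.
move=> Tne F1 S; split=> [[FS minS]|[x ->]].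
  have [x0 _] := card_gt0P Tne.
  have := minS _ (F1 x0); have := forcing_card_gt0 Tne FS; rewrite cards1 => pos le1.
  by apply/cards1P; rewrite eqn_leq le1 pos.
by split=> // S' FS'; rewrite cards1 forcing_card_gt0.
Qed.

Section PairwiseAdjacentMinimumSets.
Hypothesis hadj : forall S S', minimum S -> minimum S' -> S != S' -> te_adj S S'.

Lemma minimum_avoiding S1 S2 S3 c : minimum S1 -> minimum S2 -> minimum S3 ->
  c \in S1 -> c \in S2 -> c \notin S3 -> (S1 :|: S2) :\ c \subset S3.
Proof.
move=> m1 m2 m3 c1 c2 c3.
have sub S : minimum S -> c \in S -> S :\ c \subset S3.
  move=> mS cS; have nSS3 : S != S3 by apply: contraNneq c3 => <-.
  exact: te_adj_subD1 (hadj mS m3 nSS3) cS c3.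
by rewrite setDUl subUset !sub.
Qed.

(* With [k := #|S| >= 2]: two minimum sets sharing a vertex [c] span [k + 1]
   vertices [U], the only minimum set avoiding [c] is [U :\ c], and a minimum
   set through a vertex outside [U] cannot be adjacent to all three. *)
Lemma minimum_card_le1 S : no_isolated g -> minimum S -> #|S| + 2 <= #|T| ->
  #|S| <= 1.
Proof.
move=> noiso mS ltST; rewrite leqNgt; apply/negP => k2.
have [v vS] : exists v, v \in S by apply/card_gt0P; apply: ltnW.
have [S2 mS2 vS2] := minimum_without v noiso mS.
have nSS2 : S != S2 by apply: contraNneq vS2 => <-.
have [[a Ea] _] := hadj mS mS2 nSS2.
have cSS2 : #|S :&: S2| = #|S| - 1 by have := cardsID S2 S; rewrite Ea cards1; lia.
have [c] : exists c, c \in S :&: S2 by apply/card_gt0P; lia.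
rewrite inE => /andP[cS cS2].
have [S3 mS3 cS3] := minimum_without c noiso mS.
set U := S :|: S2.
have cU : #|U| = #|S|.+1 by have := cardsUI S S2; rewrite /U (minimum_card mS mS2); lia.
have cUc : #|U :\ c| = #|S| by have := cardsD1 c U; rewrite in_setU cS /= cU; lia.
have US3 : U :\ c = S3.
  by apply/eqP; rewrite eqEcard minimum_avoiding //= (minimum_card mS mS3) cUc.
have [x xU] : exists x, x \in ~: U by apply/card_gt0P; have := cardsC U; lia.
rewrite inE in xU.
have [S4 mS4 xS4] := minimum_with x mS.
have xS3 : x \notin S3 by rewrite -US3 in_setD1 (negbTE xU) andbF.
have nS4S3 : S4 != S3 by apply: contraNneq xS3 => <-.
have cS4 : c \notin S4.
  apply: contra cS3 => cS4.
  apply: subsetP (te_adj_subD1 (hadj mS4 mS3 nS4S3) xS4 xS3) _ _.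
  by rewrite in_setD1 cS4 andbT; apply: contraNneq xU => <-; rewrite in_setU cS.
have : x |: (U :\ c) \subset S4 by rewrite subUset sub1set xS4 minimum_avoiding.
move/subset_leq_card; rewrite cardsU1 cUc in_setD1 (negbTE xU) andbF.
by rewrite (minimum_card mS mS4) ltnn.
Qed.

Lemma noncomplete_forcing_set1 x y : 0 < #|T| -> no_isolated g ->
  x != y -> ~~ g x y -> forall z, forcing [set z].
Proof.
move=> Tne noiso nxy ngxy z; have [S mS] := exists_minimum.
have le1 : #|S| <= 1.
  apply: (minimum_card_le1 noiso mS).
  have := mS.2 _ (forcing_setC2 noiso nxy ngxy).
  by have := cardsC [set x; y]; rewrite cards2 nxy; lia.
have [S' [FS' cS' zS']] := forcing_with z mS.1.
have pos : 0 < #|S'| by apply/card_gt0P; exists z.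
have /cards1P[w Sw] : #|S'| == 1 by apply/eqP; lia.
by move: zS' FS'; rewrite Sw => /set1P ->.
Qed.

End PairwiseAdjacentMinimumSets.

End PSDForcing.

Theorem theorem4p10 (T : finType) (g : rel T) (n : nat)
  (gsym : symmetric g) (girr : irreflexive g) (Tne : 0 < #|T|)
  (noiso : no_isolated g) (hTE : TE_iso_complete g n) :
  graph_iso g (complete_rel n) \/ (is_tree g /\ #|T| = n).
Proof.
have hadj := te_complete_adj hTE.
have [cpl|] := boolP [forall x, forall y, (x != y) ==> g x y].
  have {}cpl x y : x != y -> g x y by exact: implyP (forallP (forallP cpl x) y).
  have phi_inj : injective (fun x => ~: [set x] : {set T}).
    by move=> x y /setC_inj /set1_inj.
  have [h bij_h] := te_complete_bij hTE phi_inj (minimum_setC1 gsym girr Tne noiso cpl).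
  left; exists h; split=> // x y; rewrite /complete_rel (inj_eq (bij_inj bij_h)).
  by case: eqVneq => [->|/cpl]; rewrite ?girr.
case/forallPn=> x /forallPn[y]; rewrite negb_imply => /andP[nxy ngxy].
have single := noncomplete_forcing_set1 gsym girr hadj Tne noiso nxy ngxy.
have [h bij_h] := te_complete_bij hTE (@set1_inj T) (minimum_set1 Tne single).
have [x0 _] := card_gt0P Tne.
right; split; first split.
- exact: (forcing_set1_connected gsym (single x0)).
- exact: (forcing_set1_acyclic gsym girr single).
- by rewrite -(card_ord n); exact: bij_eq_card bij_h.
Qed.
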